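(* Let $\mathcal{D}$ be a set, $\Sigma$ a finite set and $R\subseteq\mathcal{D}^\Sigma$. Suppose one of the following holds: (i) $R\neq\mathcal{D}^\Sigma$, but $\pi_\Lambda R=\mathcal{D}^\Lambda$ for every non-empty proper subset $\emptyset\subset\Lambda\subset\Sigma$; (ii) $\neg R$ is non-empty, but $\pi_{\{i\}}(\neg R)\neq\mathcal{D}$ for every $i\in\Sigma$. Then $R$ is non-degenerate.
   Context: An attributed relation is a subset $R\subseteq\mathcal{D}^\Sigma$ with $\Sigma$ a finite set of attributes; for $\Lambda\subseteq\Sigma$, $\pi_\Lambda R=\{a|_\Lambda: a\in R\}$, and $\neg R=\mathcal{D}^\Sigma\setminus R$. $R$ is a Cartesian product over a partition $\Sigma=\Lambda_1\cup\dots\cup\Lambda_m$ if there exist $R^{\Lambda_i}\subseteq\mathcal{D}^{\Lambda_i}$ with $R=\{a\in\mathcal{D}^\Sigma: a|_{\Lambda_i}\in R^{\Lambda_i}\ \forall i\}$. $R$ is degenerate if it is a Cartesian product over some partition with $m>1$ and all $\Lambda_i\neq\emptyset$; otherwise non-degenerate. *)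

From mathcomp Require Import all_boot.
Unset Printing Implicit Defensive.

Definition arel (D : Type) (S : finType) := (S -> D) -> Prop.

Definition restr (D : Type) (S : finType) (a : S -> D) (L : {set S}) :
  {x : S | x \in L} -> D := fun x => a (sval x).
Arguments restr {D S} a L _.

Definition proj (D : Type) (S : finType) (L : {set S}) (R : arel D S) :
  ({x : S | x \in L} -> D) -> Prop :=
  fun b => exists a, R a /\ restr a L = b.
Arguments proj {D S} L R _.

Definition negrel (D : Type) (S : finType) (R : arel D S) : arel D S :=
  fun a => ~ R a.
Arguments negrel {D S} R _.

Definition cart_prod_over (D : Type) (S : finType) (R : arel D S)
  (P : {set {set S}}) : Prop :=
  exists RL : forall L : {set S}, ({x : S | x \in L} -> D) -> Prop,
    forall a : S -> D, R a <-> (forall L, L \in P -> RL L (restr a L)).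
Arguments cart_prod_over {D S} R P.

(* Degenerate: Cartesian product over a partition into m > 1 non-empty blocks.
   (mathcomp's [partition] already requires set0 \notin P.) *)
Definition degenerate (D : Type) (S : finType) (R : arel D S) : Prop :=
  exists P : {set {set S}},
    partition P [set: S] /\ 1 < #|P| /\ cart_prod_over R P.
Arguments degenerate {D S} R.

Definition non_degenerate (D : Type) (S : finType) (R : arel D S) : Prop :=
  ~ degenerate R.
Arguments non_degenerate {D S} R.

From mathcomp Require Import all_boot.
From Stdlib Require Import Classical FunctionalExtensionality.

Set Implicit Arguments.
Unset Strict Implicit.

(* A Cartesian product over a partition [P] is the product of its own
   projections onto the blocks of [P].  Under (i) these projections are full,
   so [R] would be full.  Under (ii), a tuple outside [R] already leaves the
   product through one block [L]; changing it at a coordinate [i] outside [L]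
   keeps it outside [R], so the projection of [~R] onto [{i}] is full. *)

Section CartesianProduct.

Variables (D : Type) (S : finType) (R : arel D S) (P : {set {set S}}).
Hypothesis RP : cart_prod_over R P.

Lemma cart_prod_overE (a : S -> D) :
  R a <-> forall L, L \in P -> proj L R (restr a L).
Proof.
have [RL HR] := RP; split=> [Ra L _ | projR]; first by exists a.
apply/HR => L LP; have [a' [Ra' <-]] := projR L LP.
exact: (proj1 (HR a') Ra').
Qed.

Lemma cart_prod_over_notin_block (a : S -> D) : ~ R a ->
  exists2 L, L \in P & forall a', restr a' L = restr a L -> ~ R a'.
Proof.
move=> nRa; apply: NNPP => noL; apply/nRa/cart_prod_overE => L LP.
apply: NNPP => nproj; apply: noL; exists L => // a' eqa' Ra'.
by apply: nproj; exists a'.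
Qed.

End CartesianProduct.

Lemma partition_block_proper (S : finType) (P : {set {set S}}) (L : {set S}) :
  partition P [set: S] -> 1 < #|P| -> L \in P -> L \proper [set: S].
Proof.
move=> /and3P [_ /trivIsetP disjP P0] /card_gt1P [L1 [L2 [L1P L2P L12]]] LP.
have [L' L'P L'L] : exists2 L', L' \in P & L' != L.
  by case: (eqVneq L1 L) => [<-|]; [exists L2; rewrite // eq_sym | exists L1].
have /set0Pn [i iL'] : L' != set0 by apply: contraNneq P0 => <-.
apply/properP; split; first exact: subsetT.
by exists i; rewrite ?inE // (disjointFr (disjP _ _ L'P LP L'L) iL').
Qed.

Lemma restr_set1_extend (D : Type) (S : finType) (a0 : S -> D) (L : {set S})
    (i : S) (b : {x : S | x \in [set i]} -> D) :
  i \notin L -> exists a, restr a [set i] = b /\ restr a L = restr a0 L.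
Proof.
move=> iL; exists (fun x => if x == i then b (exist _ i (set11 i)) else a0 x).
split; apply: functional_extensionality => -[x xin]; rewrite /restr /=.
- have /set1P ex := xin; subst x.
  by rewrite eqxx; congr b; apply: val_inj.
- by case: eqP => // ex; subst x; rewrite xin in iL.
Qed.

Theorem theorem4 (D : Type) (S : finType) (R : arel D S) :
  ( (exists a, ~ R a) /\
    (forall L : {set S}, L != set0 -> L \proper [set: S] ->
       forall b : {x : S | x \in L} -> D, proj L R b) )
  \/
  ( (exists a, negrel R a) /\
    (forall i : S, ~ (forall b : {x : S | x \in [set i]} -> D,
                        proj [set i] (negrel R) b)) ) ->
  non_degenerate R.
Proof.
move=> hyp [P [partP [P1 RP]]].
have properL L : L \in P -> L \proper [set: S] :=
  partition_block_proper partP P1.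
case: hyp => [[[a0 nRa0] projR] | [[a0 nRa0] projNR]].
- apply/nRa0/(cart_prod_overE RP) => L LP; apply: (projR L _ (properL L LP)).
  by case/and3P: partP => _ _; apply: contraNneq => <-.
- have [L LP outL] := cart_prod_over_notin_block RP nRa0.
  have /properP [_ [i _ iL]] := properL L LP.
  apply: (projNR i) => b; have [a [ab aL]] := restr_set1_extend a0 b iL.
  by exists a; split=> //; apply: outL.
Qed.
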